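(* Consider the deterministic split-node max-neighbour algorithm described in the context, on a dynamic graph $(G_r)_{r\ge1}$ with node set $V$. For every round $r\ge1$ and every edge $e=(u,v)\in E_r$, there exists an edge $e'\in E_r$ that connects at round $r$ (in one of its orientations) such that $e'$ is within $3$ hops of $e$ in $G_r$ and $d_{w_{r-1}}(e')\ge d_{w_{r-1}}(e)$.
   Context: Setting: a fixed set $V$ of $n$ nodes, a sequence of connected graphs $G_r=(V,E_r)$ ($r\ge1$), $N_r(v)$ the neighbours of $v$ in $G_r$, non-negative real loads $w_0(v)$, and $w_r(v)$ the load of $v$ at the end of round $r$. For an edge or pair $(x,y)$, $d_w(x,y)=|w(x)-w(y)|$. Algorithm: each node $v$ is split into two virtual nodes $v_s$ (sender) and $v_a$ (receiver). In round $r$: set $w_r^1(v_s)=w_r^1(v_a)=w_{r-1}(v)/2$. Each $v_s$ sends a proposal to $u_a$ where $u\in N_r(v)$ maximizes $|w_{r-1}(u)-w_{r-1}(v)|$ (ties broken by a fixed deterministic rule). Each $v_a$ that received proposals accepts exactly one, from $u_s$ with $u$ maximizing $|w_{r-1}(u)-w_{r-1}(v)|$ among proposers (deterministic tie-breaking). For each accepted pair $(u_s,v_a)$, set both virtual loads to $(w_r^1(u_s)+w_r^1(v_a))/2$; other virtual nodes keep their value; then $w_r(v)$ is the sum of the two virtual loads of $v$. An ordered pair $(u,v)$ connects at round $r$ if $u_s$'s proposal to $v_a$ was accepted in round $r$. *)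

From HB Require Import structures.
From mathcomp Require Import all_boot all_order all_algebra.
Set Implicit Arguments. Unset Strict Implicit. Unset Printing Implicit Defensive.
Import Order.TTheory GRing.Theory Num.Theory.
Local Open Scope ring_scope.

Definition simple_graph (V : finType) (g : rel V) : Prop :=
  symmetric g /\ irreflexive g.
Definition connected_graph (V : finType) (g : rel V) : Prop :=
  forall x y : V, connect g x y.

Definition dw (R : realFieldType) (V : finType) (w : V -> R) (x y : V) : R :=
  `|w x - w y|.

(* Proposals of senders and acceptances of receivers in one round.
   [prop v = Some u] : v_s proposes to u_a.  [acc v = Some u] : v_a accepts u_s. *)
Definition valid_proposals (R : realFieldType) (V : finType) (g : rel V)
    (w : V -> R) (prop : V -> option V) : Prop :=
  forall v : V,
    match prop v with
    | Some u => g v u /\ (forall u', g v u' -> dw w u' v <= dw w u v)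
    | None => forall u, ~~ g v u
    end.

Definition valid_acceptances (R : realFieldType) (V : finType)
    (w : V -> R) (prop : V -> option V) (acc : V -> option V) : Prop :=
  forall v : V,
    match acc v with
    | Some u => prop u = Some v /\
                (forall u', prop u' = Some v -> dw w u' v <= dw w u v)
    | None => forall u, prop u <> Some v
    end.

Definition sender_load (R : realFieldType) (V : finType) (w : V -> R)
    (prop acc : V -> option V) (v : V) : R :=
  match prop v with
  | Some u => if acc u == Some v then (w v / 2 + w u / 2) / 2 else w v / 2
  | None => w v / 2
  end.

Definition receiver_load (R : realFieldType) (V : finType) (w : V -> R)
    (acc : V -> option V) (v : V) : R :=
  match acc v with
  | Some u => (w u / 2 + w v / 2) / 2
  | None => w v / 2
  end.

Definition round_step (R : realFieldType) (V : finType) (w : V -> R)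
    (prop acc : V -> option V) : V -> R :=
  fun v => sender_load w prop acc v + receiver_load w acc v.

Fixpoint load (R : realFieldType) (V : finType) (w0 : V -> R)
    (prop acc : nat -> V -> option V) (r : nat) : V -> R :=
  match r with
  | 0 => w0
  | r'.+1 => round_step (load w0 prop acc r') (prop r'.+1) (acc r'.+1)
  end.

Definition connects (V : finType) (prop acc : nat -> V -> option V)
    (r : nat) (x y : V) : Prop :=
  prop r x = Some y /\ acc r y = Some x.

Definition edge_in_walk (V : finType) (x y : V) (p : seq V) : bool :=
  ((x, y) \in zip p (behead p)) || ((y, x) \in zip p (behead p)).

Definition within_hops (V : finType) (g : rel V) (k : nat) (x y x' y' : V) : Prop :=
  exists (a : V) (s : seq V),
    [/\ path g a s, (size s <= k)%N, edge_in_walk x y (a :: s)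
      & edge_in_walk x' y' (a :: s)].

From HB Require Import structures.
From mathcomp Require Import all_boot all_order all_algebra.
Set Implicit Arguments.
Unset Strict Implicit.
Unset Printing Implicit Defensive.
Import Order.TTheory GRing.Theory Num.Theory.
Local Open Scope ring_scope.

(* The sender of u proposes to some p with d(u,p) >= d(u,v). The receiver of p
   has then received a proposal, so it accepts one, from some q with
   d(q,p) >= d(u,p). The accepted pair (q,p) connects, and the walk v-u-p-q
   has three edges and contains both {u,v} and {q,p}. *)

Section OneRound.

Variables (R : realFieldType) (V : finType) (g : rel V) (w : V -> R).
Variables (prop acc : V -> option V).

Lemma dwC x y : dw w x y = dw w y x.
Proof. exact: distrC. Qed.

Lemma valid_proposals_some u v :
  valid_proposals g w prop -> g u v ->
  exists2 p, prop u = Some p & g u p /\ dw w v u <= dw w p u.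
Proof.
move=> /(_ u); case: (prop u) => [p [gup max_p] | /(_ v) /negP //] guv.
by exists p => //; split; last exact: max_p.
Qed.

Lemma valid_acceptances_some u p :
  valid_acceptances w prop acc -> prop u = Some p ->
  exists2 q, acc p = Some q & prop q = Some p /\ dw w u p <= dw w q p.
Proof.
move=> /(_ p); case: (acc p) => [q [prop_q max_q] | /(_ u) //] prop_u.
by exists q => //; split; last exact: max_q.
Qed.

Lemma within_hops3_walk u v p q :
  symmetric g -> g u v -> g u p -> g q p -> within_hops g 3 u v q p.
Proof.
move=> g_sym guv gup gqp.
exists v, [:: u; p; q]; split => //=.
- by rewrite -g_sym guv gup g_sym gqp.
- by rewrite /edge_in_walk /= !inE eqxx !orbT.
- by rewrite /edge_in_walk /= !inE eqxx !orbT.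
Qed.

Lemma max_neighbour_connects_nearby u v :
  symmetric g -> valid_proposals g w prop -> valid_acceptances w prop acc ->
  g u v ->
  exists x y, [/\ g x y, prop x = Some y /\ acc y = Some x,
                  within_hops g 3 u v x y & dw w u v <= dw w x y].
Proof.
move=> g_sym vprop vacc guv.
have [p prop_u [gup le_vp]] := valid_proposals_some vprop guv.
have [q acc_p [prop_q le_uq]] := valid_acceptances_some vacc prop_u.
have := vprop q; rewrite prop_q => -[gqp _].
exists q, p; split => //; first exact: within_hops3_walk.
by rewrite dwC (le_trans le_vp) // dwC.
Qed.

End OneRound.

Theorem claim2 (R : realFieldType) (V : finType) (G : nat -> rel V)
    (w0 : V -> R) (prop acc : nat -> V -> option V) :
  (forall r, (1 <= r)%N -> simple_graph (G r) /\ connected_graph (G r)) ->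
  (forall v, 0 <= w0 v) ->
  (forall r, (1 <= r)%N ->
     valid_proposals (G r) (load w0 prop acc r.-1) (prop r) /\
     valid_acceptances (load w0 prop acc r.-1) (prop r) (acc r)) ->
  forall r, (1 <= r)%N ->
  forall u v : V, G r u v ->
  exists x y : V,
    [/\ G r x y, connects prop acc r x y \/ connects prop acc r y x,
        within_hops (G r) 3 u v x y
      & dw (load w0 prop acc r.-1) u v <= dw (load w0 prop acc r.-1) x y].
Proof.
move=> graphs _ valid r r_ge1 u v guv.
have [[G_sym _] _] := graphs r r_ge1.
have [vprop vacc] := valid r r_ge1.
have [x [y [gxy conn near le_d]]] :=
  max_neighbour_connects_nearby G_sym vprop vacc guv.
by exists x, y; split => //; left.
Qed.
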